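(* Let $\mathcal{S}\subset\mathbb{R}_{\ge0}$ be measurable with positive Lebesgue measure, let $G_1,\dots,G_K$ be probability distributions on $\mathbb{R}$, and let $\mathcal{G}=\mathrm{ConvexHull}(G_1,\dots,G_K)=\{\sum_{j=1}^K\pi_jG_j:\pi_j\ge0,\sum_j\pi_j=1\}$. Then $$\mathrm{Tilt}[\mathcal{G}]=\mathrm{ConvexHull}(\mathrm{Tilt}[G_1],\dots,\mathrm{Tilt}[G_K]).$$
   Context: $\varphi(z;\mu)$ is the $\mathrm{N}(\mu,1)$ density, $\varphi^{\mathrm{fold}}(z;\mu)=\varphi(z;\mu)+\varphi(-z;\mu)$, $\Phi(\mathcal{S};\mu)=\int_{\mathcal{S}}\varphi^{\mathrm{fold}}(z;\mu)dz$, $\mathrm{Tilt}[G](d\mu)=\frac{\Phi(\mathcal{S};\mu)G(d\mu)}{\int\Phi(\mathcal{S};\mu')G(d\mu')}$, and $\mathrm{Tilt}[\mathcal{G}]=\{\mathrm{Tilt}[G]:G\in\mathcal{G}\}$. *)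

From HB Require Import structures.
From mathcomp Require Import all_boot all_order all_algebra.
From mathcomp Require Import all_classical all_reals all_analysis.
Set Implicit Arguments. Unset Strict Implicit. Unset Printing Implicit Defensive.
Import Order.TTheory GRing.Theory Num.Theory.
Local Open Scope classical_set_scope.
Local Open Scope ring_scope.

Definition phi {R : realType} (z mu : R) : R := normal_pdf mu 1 z.

Definition phifold {R : realType} (z mu : R) : R := phi z mu + phi (- z) mu.

Definition PhiS {R : realType} (S : set R) (mu : R) : \bar R :=
  (\int[lebesgue_measure]_(z in S) (phifold z mu)%:E)%E.

Definition Tilt {R : realType} (S : set R)
    (G : {measure set (measurableTypeR R) -> \bar R}) : set R -> \bar R :=
  fun A => ((\int[G]_(m in A) PhiS S m) *
            ((fine (\int[G]_m PhiS S m))^-1)%:E)%E.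

Definition simplex {R : realType} (K : nat) (pi : 'I_K -> R) : Prop :=
  (forall j, 0 <= pi j) /\ \sum_(j < K) pi j = 1.

Definition mixture {R : realType} (K : nat) (pi : 'I_K -> R)
    (F : 'I_K -> set R -> \bar R) : set R -> \bar R :=
  fun A => (\sum_(j < K) (pi j)%:E * F j A)%E.

Definition eqdist {R : realType} (F1 F2 : set R -> \bar R) : Prop :=
  forall A : set (measurableTypeR R), measurable A -> F1 A = F2 A.

Definition ConvexHull {R : realType} (K : nat)
    (F : 'I_K -> set R -> \bar R) (H : set R -> \bar R) : Prop :=
  exists pi : 'I_K -> R, simplex pi /\ eqdist H (mixture pi F).

From HB Require Import structures.
From mathcomp Require Import all_boot all_order all_algebra.
From mathcomp Require Import all_classical all_reals all_analysis.
From mathcomp Require Import measurable_realfun.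
From mathcomp.algebra_tactics Require Import ring.
Set Implicit Arguments.
Unset Strict Implicit.
Unset Printing Implicit Defensive.
Import Order.TTheory GRing.Theory Num.Theory.
Local Open Scope classical_set_scope.
Local Open Scope ring_scope.

(* Put Z(G) := int Phi(S; mu) G(dmu), which is finite and positive because
   0 < Phi(S; mu) <= 2.  Before normalisation tilting is linear in G, so for
   G = sum_j pi_j G_j we get Tilt[G] = sum_j (pi_j Z(G_j) / sum_k pi_k Z(G_k))
   Tilt[G_j].  The reweighting pi |-> (pi_j Z_j / sum_k pi_k Z_k)_j is a
   bijection of the simplex, with inverse w |-> (w_j / Z_j / sum_k w_k / Z_k)_j,
   which gives both inclusions. *)

Lemma integral_gt0 d (T : measurableType d) (R : realType)
    (mu : {measure set T -> \bar R}) (D : set T) (f : T -> \bar R) :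
  measurable D -> measurable_fun D f -> (forall x, D x -> (0 < f x)%E) ->
  (0 < mu D)%E -> (0 < \int[mu]_(x in D) f x)%E.
Proof.
move=> mD mf f_gt0 muD_gt0.
have f_ge0 x : D x -> (0 <= f x)%E by move/f_gt0/ltW.
rewrite lt_neqAle integral_ge0 // andbT eq_sym; apply/negP => /eqP intf0.
have : (\int[mu]_(x in D) `|f x| = 0)%E.
  rewrite -intf0; apply: eq_integral => x /[!inE] Dx.
  by rewrite gee0_abs ?f_ge0.
move=> /(ae_eq_integral_abs mu mD mf) [N [mN muN0 DN]].
suff muD0 : mu D = 0%E by move: muD_gt0; rewrite muD0 ltxx.
apply: (subset_measure0 mD mN) => // x Dx; apply: DN => /= /(_ Dx) fx0.
by move: (f_gt0 x Dx); rewrite fx0 ltxx.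
Qed.

(* [probability_setT] stated through the coercion [probability >-> measure],
   which is the form in which [P setT] appears once [P] is used as a measure. *)
Lemma probability_measure_setT d (T : measurableType d) (R : realType)
    (P : probability T R) :
  (P : {measure set T -> \bar R}) setT = 1%E.
Proof. exact: probability_setT. Qed.

Section finite_mixture.
Context d (T : measurableType d) (R : realType) (K : nat).
Variables (G : 'I_K -> {measure set T -> \bar R}) (p : 'I_K -> R).
Hypothesis p0 : forall j, 0 <= p j.

(* [msum] sums a [nat]-indexed family; indices [k >= K] get [mzero]. *)
Definition mixture_measure :=
  msum (fun k => if insub k is Some j then mscale (NngNum (p0 j)) (G j)
                 else mzero) K.

HB.instance Definition _ := Measure.on mixture_measure.

Lemma mixture_measureE A :
  mixture_measure A = (\sum_(j < K) (p j)%:E * G j A)%E.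
Proof. by apply: eq_bigr => j _; rewrite (valK j). Qed.

Lemma ge0_integral_mixture_measure (D : set T) (f : T -> \bar R) :
  measurable D -> (forall x, D x -> (0 <= f x)%E) -> measurable_fun D f ->
  (\int[mixture_measure]_(x in D) f x =
   \sum_(j < K) (p j)%:E * \int[G j]_(x in D) f x)%E.
Proof.
move=> mD f_ge0 mf; rewrite ge0_integral_measure_sum //.
by apply: eq_bigr => j _; rewrite (valK j) ge0_integral_mscale.
Qed.

End finite_mixture.

Section mixture_probability.
Context d (T : measurableType d) (R : realType) (K : nat).
Variables (G : 'I_K -> probability T R) (p : 'I_K -> R).
Hypothesis p_simplex : simplex p.

Definition mixture_prob := mixture_measure G (proj1 p_simplex).

HB.instance Definition _ := Measure.on mixture_prob.

Lemma mixture_prob_setT : mixture_prob setT = 1%E.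
Proof.
rewrite /mixture_prob mixture_measureE.
under eq_bigr do rewrite probability_measure_setT mule1.
by rewrite sumEFin (proj2 p_simplex).
Qed.

HB.instance Definition _ :=
  Measure_isProbability.Build _ _ _ mixture_prob mixture_prob_setT.

End mixture_probability.

Section reweighting.
Variables (R : realType) (K : nat) (Z : 'I_K -> R).
Hypothesis Z_gt0 : forall j, 0 < Z j.

Lemma simplex_dot_gt0 (p c : 'I_K -> R) :
  simplex p -> (forall j, 0 < c j) -> 0 < \sum_(k < K) p k * c k.
Proof.
move=> [p0 p1] c_gt0.
have pc_ge0 k : 0 <= p k * c k by rewrite mulr_ge0 ?p0 ?ltW.
rewrite lt_neqAle sumr_ge0 // andbT eq_sym; apply/negP => /eqP pc0.
suff : \sum_(k < K) p k = 0 by rewrite p1 => /eqP; rewrite oner_eq0.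
apply: big1 => k _.
have /eqP := psumr_eq0P (fun k _ => pc_ge0 k) pc0 (i := k) isT.
by rewrite mulf_eq0 (gt_eqF (c_gt0 k)) orbF => /eqP.
Qed.

Definition reweight (p : 'I_K -> R) (j : 'I_K) : R :=
  p j * Z j / \sum_(k < K) p k * Z k.

Definition reweight_inv (w : 'I_K -> R) (j : 'I_K) : R :=
  w j / Z j / \sum_(k < K) w k / Z k.

Lemma reweight_simplex p : simplex p -> simplex (reweight p).
Proof.
move=> sp; have S_gt0 := simplex_dot_gt0 sp Z_gt0; split.
  by move=> j; rewrite divr_ge0 ?mulr_ge0 ?(proj1 sp) ?ltW.
by rewrite -mulr_suml divff // gt_eqF.
Qed.

Lemma reweight_inv_simplex w : simplex w -> simplex (reweight_inv w).
Proof.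
move=> sw; have Zinv_gt0 j : 0 < (Z j)^-1 by rewrite invr_gt0.
have S_gt0 := simplex_dot_gt0 sw Zinv_gt0; split.
  by move=> j; rewrite divr_ge0 ?divr_ge0 ?(proj1 sw) ?ltW.
by rewrite -mulr_suml divff // gt_eqF.
Qed.

Lemma reweight_invK w : simplex w -> reweight (reweight_inv w) = w.
Proof.
move=> sw; have Zinv_gt0 j : 0 < (Z j)^-1 by rewrite invr_gt0.
have S_neq0 := gt_eqF (simplex_dot_gt0 sw Zinv_gt0).
have Z_neq0 j := gt_eqF (Z_gt0 j).
have reweight_invZ j : reweight_inv w j * Z j = w j / \sum_(k < K) w k / Z k.
  by rewrite /reweight_inv; field; rewrite Z_neq0 S_neq0.
apply/funext => j; rewrite /reweight.
under eq_bigr do rewrite reweight_invZ.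
by rewrite reweight_invZ -mulr_suml (proj2 sw) div1r invrK divfK ?S_neq0.
Qed.

End reweighting.

Section tilt.
Context d (T : measurableType d) (R : realType).
Variables (f : T -> \bar R) (M : R).
Hypothesis mf : measurable_fun setT f.
Hypothesis f_gt0 : forall x, (0 < f x)%E.
Hypothesis f_le : forall x, (f x <= M%:E)%E.

(* [Tilt S] is convertible to [tilt (PhiS S)]. *)
Definition tilt (P : {measure set T -> \bar R}) (A : set T) : \bar R :=
  (\int[P]_(x in A) f x * ((fine (\int[P]_x f x))^-1)%:E)%E.

Definition tilt_mass (P : {measure set T -> \bar R}) (A : set T) : R :=
  fine (\int[P]_(x in A) f x).

Definition tilt_norm (P : {measure set T -> \bar R}) : R := tilt_mass P setT.

Let f_ge0 x : (0 <= f x)%E. Proof. exact/ltW. Qed.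

Lemma tilt_massE (P : probability T R) (A : set T) : measurable A ->
  (\int[P]_(x in A) f x)%E = (tilt_mass P A)%:E.
Proof.
move=> mA; rewrite /tilt_mass fineK // ge0_fin_numE ?integral_ge0 //.
apply: (@le_lt_trans _ _ (\int[P]_(x in A) (cst M%:E) x)%E).
  by apply: ge0_le_integral => //; exact: measurable_funTS.
by rewrite integral_cst // ltey_eq fin_numM // fin_num_measure.
Qed.

Lemma tilt_norm_gt0 (P : probability T R) : 0 < tilt_norm P.
Proof.
rewrite -lte_fin -tilt_massE //; apply: integral_gt0 => //.
by rewrite probability_measure_setT.
Qed.

Lemma tiltE (P : probability T R) (A : set T) : measurable A ->
  tilt P A = (tilt_mass P A / tilt_norm P)%:E.
Proof. by move=> mA; rewrite /tilt !tilt_massE. Qed.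

Variables (K : nat) (G : 'I_K -> probability T R).

Lemma tilt_mass_mixture (P : probability T R) (p : 'I_K -> R) :
  (forall j, 0 <= p j) ->
  (forall A, measurable A -> P A = \sum_(j < K) (p j)%:E * G j A)%E ->
  forall A, measurable A ->
  tilt_mass P A = \sum_(j < K) p j * tilt_mass (G j) A.
Proof.
move=> p0 P_mixture A mA.
rewrite {1}/tilt_mass (eq_measure_integral (mixture_measure G p0)); last first.
  move=> B mB _.
  exact: etrans (P_mixture B mB) (esym (mixture_measureE _ _ B)).
rewrite ge0_integral_mixture_measure //; last exact: measurable_funTS.
under eq_bigr do rewrite tilt_massE // -EFinM.
by rewrite sumEFin.
Qed.

Lemma tilt_mixture (P : probability T R) (p : 'I_K -> R) :
  (forall j, 0 <= p j) ->
  (forall A, measurable A -> P A = \sum_(j < K) (p j)%:E * G j A)%E ->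
  forall A, measurable A ->
  tilt P A = (\sum_(j < K)
               (reweight (fun j => tilt_norm (G j)) p j)%:E * tilt (G j) A)%E.
Proof.
move=> p0 P_mixture A mA.
have normP : tilt_norm P = \sum_(j < K) p j * tilt_norm (G j).
  exact: tilt_mass_mixture p0 P_mixture _ measurableT.
have normP_neq0 := gt_eqF (tilt_norm_gt0 P).
under eq_bigr do rewrite tiltE // -EFinM.
rewrite tiltE // (tilt_mass_mixture p0 P_mixture mA).
rewrite sumEFin /reweight -normP mulr_suml; congr EFin; apply: eq_bigr => j _.
have normGj_neq0 := gt_eqF (tilt_norm_gt0 (G j)).
by field; rewrite normP_neq0 normGj_neq0.
Qed.

End tilt.

Section folded_normal.
Variable R : realType.

Lemma phiE (z m : R) : phi z m = normal_pdf 0 1 (z - m).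
Proof. by rewrite /phi /normal_pdf oner_eq0 /normal_fun subr0. Qed.

Lemma phiN (z m : R) : phi (- z) m = phi z (- m).
Proof. by rewrite /phi /normal_pdf oner_eq0 /normal_fun -opprD sqrrN opprK. Qed.

Lemma phi_gt0 (z m : R) : 0 < phi z m.
Proof.
by rewrite /phi /normal_pdf oner_eq0 mulr_gt0 ?expR_gt0 ?normal_peak_gt0.
Qed.

Lemma phifold_gt0 (z m : R) : 0 < phifold z m.
Proof. by rewrite /phifold addr_gt0 ?phi_gt0. Qed.

Lemma measurable_phifold (m : R) : measurable_fun setT (phifold ^~ m).
Proof.
apply: measurable_funD; first exact: measurable_normal_pdf.
under eq_fun do rewrite phiN; exact: measurable_normal_pdf.
Qed.

Lemma integral_phi (m : R) : (\int[lebesgue_measure]_z (phi z m)%:E = 1)%E.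
Proof. exact: integral_normal_pdf. Qed.

Lemma integral_phifold (m : R) :
  (\int[lebesgue_measure]_z (phifold z m)%:E = 2%:E)%E.
Proof.
have phi_ge0 (m' : R) z : [set: R] z -> (0 <= (phi z m')%:E)%E.
  by rewrite lee_fin ltW ?phi_gt0.
have mphi (m' : R) : measurable_fun setT (fun z : R => (phi z m')%:E).
  by apply/measurable_EFinP; exact: measurable_normal_pdf.
under eq_integral do rewrite /phifold EFinD phiN.
rewrite ge0_integralD //;
  [|exact: phi_ge0|exact: mphi|exact: phi_ge0|exact: mphi].
transitivity (1 + 1 : \bar R)%E; last by rewrite -EFinD.
by congr (_ + _); exact: integral_phi.
Qed.

Variable S : set R.
Hypothesis mS : measurable S.

Lemma PhiS_gt0 : (0 < lebesgue_measure S)%E -> forall m, (0 < PhiS S m)%E.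
Proof.
move=> muS_gt0 m; apply: integral_gt0 => //.
- by apply/measurable_funTS/measurable_EFinP; exact: measurable_phifold.
- by move=> z _; rewrite lte_fin phifold_gt0.
Qed.

Lemma PhiS_le2 (m : R) : (PhiS S m <= 2%:E)%E.
Proof.
rewrite -(integral_phifold m); apply: ge0_subset_integral => //.
- by apply/measurable_EFinP; exact: measurable_phifold.
- by move=> z _; rewrite lee_fin ltW ?phifold_gt0.
Qed.

Lemma measurable_PhiS : measurable_fun setT (PhiS S).
Proof.
pose F (mz : R * R) := (phifold mz.2 mz.1 * \1_S mz.2)%:E.
have mF : measurable_fun setT F.
  apply/measurable_EFinP; apply: measurable_funM; last first.
    by apply: measurableT_comp => //; exact: measurable_indic.
  under eq_fun do rewrite /phifold !phiE.
  apply: measurable_funD.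
    apply: measurableT_comp; first exact: measurable_normal_pdf.
    exact: measurable_funB.
  apply: measurableT_comp; first exact: measurable_normal_pdf.
  by apply: measurable_funB => //; exact: measurableT_comp.
have F_ge0 mz : (0 <= F mz)%E.
  by rewrite /F lee_fin mulr_ge0 ?ler0n // ltW ?phifold_gt0.
rewrite (_ : PhiS S = fubini_F lebesgue_measure F).
  exact: measurable_fun_fubini_tonelli_F.
apply/funext => m; rewrite /PhiS /fubini_F [LHS]integral_mkcond.
apply: eq_integral => z _; rewrite /F /patch indicE /=.
by case: ifP => _; rewrite ?mulr1 ?mulr0.
Qed.

End folded_normal.

Theorem propositionS1 (R : realType) (S : set (measurableTypeR R))
  (hS : measurable S) (hS0 : S `<=` [set x | 0 <= x])
  (hSpos : (0 < lebesgue_measure S)%E)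
  (K : nat) (G : 'I_K -> probability (measurableTypeR R) R) :
  (* Tilt[G] for G in the hull lies in the hull of the Tilt[G_j] *)
  (forall P : probability (measurableTypeR R) R,
     ConvexHull (fun j => (G j : set R -> \bar R)) P ->
     ConvexHull (fun j => Tilt S (G j)) (Tilt S P)) /\
  (* every element of the hull of the Tilt[G_j] is Tilt[G] for some G in the hull *)
  (forall H : set R -> \bar R,
     ConvexHull (fun j => Tilt S (G j)) H ->
     exists P : probability (measurableTypeR R) R,
       ConvexHull (fun j => (G j : set R -> \bar R)) P /\ eqdist H (Tilt S P)).
Proof.
have mPhi : measurable_fun [set: measurableTypeR R] (PhiS S).
  exact: measurable_PhiS.
have Phi_gt0 := PhiS_gt0 hS hSpos.
have Phi_le2 := PhiS_le2 hS.
pose Z j := tilt_norm (T := measurableTypeR R) (PhiS S) (G j).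
have Z_gt0 j : 0 < Z j := tilt_norm_gt0 mPhi Phi_gt0 Phi_le2 (G j).
split.
- move=> P [p [p_simplex P_mixture]]; exists (reweight Z p).
  split=> [|A mA]; first exact: reweight_simplex.
  exact (tilt_mixture mPhi Phi_gt0 Phi_le2 (proj1 p_simplex) P_mixture mA).
- move=> H [w [w_simplex H_mixture]].
  have p_simplex := reweight_inv_simplex Z_gt0 w_simplex.
  pose P := mixture_prob G p_simplex.
  have P_mixture A : measurable A ->
      P A = (\sum_(j < K) (reweight_inv Z w j)%:E * G j A)%E.
    by move=> _; exact: mixture_measureE.
  exists P; split; first by exists (reweight_inv Z w).
  move=> A mA; rewrite H_mixture // -{1}(reweight_invK Z_gt0 w_simplex).
  symmetry.
  exact (tilt_mixture mPhi Phi_gt0 Phi_le2 (proj1 p_simplex) P_mixture mA).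
Qed.
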